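(* Let $E_1|H_1$, $E_2|H_2$, $E_3|H_3$ be conditional events with $\{E_1|H_1,E_2|H_2\}$ p-consistent. Then the quasi conjunction $QC(E_1|H_1,E_2|H_2)$ p-entails $E_3|H_3$ if and only if $(E_3|H_3)|QC(E_1|H_1,E_2|H_2)=1$. *)

From HB Require Import structures.
From mathcomp Require Import all_boot all_order all_algebra.
Set Implicit Arguments. Unset Strict Implicit. Unset Printing Implicit Defensive.
Import Order.TTheory GRing.Theory Num.Theory.
Local Open Scope ring_scope.

Section Framework.
Variables (R : realFieldType) (Omega : finType).

Record cevent := CEvent { ev : {set Omega}; cond : {set Omega} }.

(* Betting-scheme coherence of a prevision assessment p on a finite family of
   conditional random quantities X_i | H_i (the values X_i may depend on the
   assessment; they are supplied already evaluated). *)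
Definition coherent (n : nat) (X : 'I_n -> Omega -> R) (H : 'I_n -> {set Omega})
    (p : 'I_n -> R) : Prop :=
  forall s : 'I_n -> R, (exists i, s i != 0) ->
    let G := fun w => \sum_(i < n) s i * ((w \in H i)%:R * (X i w - p i)) in
    (exists2 w, [exists i, (s i != 0) && (w \in H i)] & G w <= 0) /\
    (exists2 w, [exists i, (s i != 0) && (w \in H i)] & 0 <= G w).

Definition ce_coherent (n : nat) (F : 'I_n -> cevent) (p : 'I_n -> R) : Prop :=
  coherent (fun i w => (w \in ev (F i))%:R) (fun i => cond (F i)) p.

Definition p_consistent (n : nat) (F : 'I_n -> cevent) : Prop :=
  ce_coherent F (fun _ => 1).

Definition ext_family (n : nat) (F : 'I_n -> cevent) (G : cevent) (i : 'I_n.+1)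
  : cevent :=
  match unlift ord_max i with Some j => F j | None => G end.

Definition p_entails (n : nat) (F : 'I_n -> cevent) (G : cevent) : Prop :=
  p_consistent F /\
  forall p : 'I_n.+1 -> R, ce_coherent (ext_family F G) p ->
    (forall j : 'I_n, p (lift ord_max j) = 1) -> p ord_max = 1.

Definition quasi_conj (c1 c2 : cevent) : cevent :=
  CEvent ((ev c1 :|: ~: cond c1) :&: (ev c2 :|: ~: cond c2))
         (cond c1 :|: cond c2).

(* Value of the conditional event c = A|H in constituent w, given P(A|H) = x:
   1 on AH, 0 on ~A H, x on ~H. *)
Definition ce_val (c : cevent) (x : R) (w : Omega) : R :=
  if w \in cond c then (w \in ev c)%:R else x.

(* Conjunction (A|H) /\ (B|K) given P(A|H)=x, P(B|K)=y, P(conj)=z: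
   1 on AHBK, 0 on ~AH or ~BK, x on ~H BK, y on AH ~K, z on ~H ~K. *)
Definition conj_val (a b : cevent) (x y z : R) (w : Omega) : R :=
  if w \in cond a then
    (if w \in ev a then (if w \in cond b then (w \in ev b)%:R else y) else 0)
  else
    (if w \in cond b then (if w \in ev b then x else 0) else z).

Definition neg_val (a : cevent) (x : R) (w : Omega) : R :=
  if w \in cond a then (w \notin ev a)%:R else 1 - x.

(* Iterated conditional (B|K)|(A|H) = (B|K) /\ (A|H) + mu (~A|H),
   where mu = P[(B|K)|(A|H)]. *)
Definition iter_val (b a : cevent) (x y z mu : R) (w : Omega) : R :=
  conj_val a b x y z w + mu * neg_val a x w.

(* The conjunction is conditioned on H \/ K; the bet on the
   iterated conditional is called off where its conditioning conditional
   event A|H takes value 0. *)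
Definition iter_family_val (b a : cevent) (x y z mu : R) (i : 'I_4) (w : Omega) : R :=
  match val i with
  | 0 => (w \in ev a)%:R
  | 1 => (w \in ev b)%:R
  | 2 => conj_val a b x y z w
  | _ => iter_val b a x y z mu w
  end.

Definition iter_family_cond (b a : cevent) (x : R) (i : 'I_4) : {set Omega} :=
  match val i with
  | 0 => cond a
  | 1 => cond b
  | 2 => cond a :|: cond b
  | _ => [set w | ce_val a x w != 0]
  end.

Definition iter_coherent (b a : cevent) (x y z mu : R) : Prop :=
  coherent (iter_family_val b a x y z mu) (iter_family_cond b a x)
           (fun i => nth 0 [:: x; y; z; mu] i).

Definition iter_eq1 (b a : cevent) : Prop :=
  forall x y z mu : R, iter_coherent b a x y z mu ->
    forall w : Omega, iter_val b a x y z mu w = 1.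

End Framework.

(* Both sides are equivalent to one set-theoretic condition on a := QC(E1|H1,E2|H2)
   and b := E3|H3, namely "H3 is included in E3, or a is included in b in the
   Goodman--Nguyen order", provided a can be true -- which p-consistency of
   {E1|H1, E2|H2} guarantees.  Under this condition, suitable bets show that a
   coherent assessment with P(a) = 1 has P(b) = 1, and that a coherent assessment
   (x, y, z, mu) of a, b, their conjunction and the iterated conditional has
   z = x and mu = 1, so that (b|a) takes the value c + mu (1 - c) = 1, where c
   is the value of a.  When the condition fails, a witness constituent makes the
   assessments (1, 0) on {a, b} and (1, 0, 0, 0) on the iterated family coherent,
   refuting both sides at once. *)
From HB Require Import structures.
From mathcomp Require Import all_boot all_order all_algebra.
From mathcomp Require Import lra.
Set Implicit Arguments. Unset Strict Implicit. Unset Printing Implicit Defensive.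
Import Order.TTheory GRing.Theory Num.Theory.
Local Open Scope ring_scope.

Section Coherence.
Variables (R : realFieldType) (Omega : finType) (n : nat).
Variables (X : 'I_n -> Omega -> R) (H : 'I_n -> {set Omega}) (p : 'I_n -> R).

Lemma coherent_prev_between i : coherent X H p ->
  (exists2 w, w \in H i & X i w <= p i) /\ (exists2 w, w \in H i & p i <= X i w).
Proof.
pose s j : R := (j == i)%:R.
have gainE w : \sum_(j < n) s j * ((w \in H j)%:R * (X j w - p j))
               = (w \in H i)%:R * (X i w - p i).
  rewrite (bigD1 i) //= big1 => [|j /negbTE ji]; first by rewrite /s eqxx mul1r addr0.
  by rewrite /s ji mul0r.
have inH w : [exists j, (s j != 0) && (w \in H j)] -> w \in H i.
  by case/existsP=> j; rewrite /s; case: (j =P i) => [-> /andP[] | _] //=; rewrite eqxx.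
move=> /(_ s) []; first by exists i; rewrite /s eqxx oner_neq0.
move=> [w /inH wH Gw] [w' /inH w'H Gw']; rewrite /= !gainE wH w'H !mul1r in Gw Gw'.
by split; [exists w; rewrite // -subr_le0 | exists w'; rewrite // -subr_ge0].
Qed.

Lemma coherent_two_bets i j (ci cj : R) : coherent X H p -> i != j -> ci != 0 -> cj != 0 ->
  let G w := ci * ((w \in H i)%:R * (X i w - p i)) + cj * ((w \in H j)%:R * (X j w - p j)) in
  (exists2 w, (w \in H i) || (w \in H j) & G w <= 0) /\
  (exists2 w, (w \in H i) || (w \in H j) & 0 <= G w).
Proof.
move=> coh ij ci0 cj0 G.
pose s k := if k == i then ci else if k == j then cj else 0.
have gainE w : \sum_(k < n) s k * ((w \in H k)%:R * (X k w - p k)) = G w.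
  rewrite (bigD1 i) // (bigD1 j) 1?eq_sym //= big1 => [|k /andP[/negbTE ki /negbTE kj]].
    by rewrite /s eqxx eq_sym (negbTE ij) eqxx addr0.
  by rewrite /s ki kj mul0r.
have inH w : [exists k, (s k != 0) && (w \in H k)] -> (w \in H i) || (w \in H j).
  case/existsP=> k /andP[]; rewrite /s; case: (k =P i) => [-> _ -> // | _].
  by case: (k =P j) => [-> _ -> | _]; rewrite ?orbT ?eqxx.
have [|[w /inH wH Gw] [w' /inH w'H Gw']] := coh s; first by exists i; rewrite /s eqxx.
by rewrite /= !gainE in Gw Gw'; split; [exists w | exists w'].
Qed.

(* Every bet is fair at [u] if it stakes on some member of [P], and at [v]
   otherwise, so its gain vanishes somewhere on its support. *)
Lemma coherent_of_fair_points (P : pred 'I_n) u v :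
  (forall i, P i -> u \in H i) -> (forall i, u \in H i -> X i u = p i) ->
  (forall i, ~~ P i -> v \in H i) -> (forall i, ~~ P i -> v \in H i -> X i v = p i) ->
  coherent X H p.
Proof.
move=> uH uX vH vX s [i si].
suff [w supp G0] : exists2 w, [exists k, (s k != 0) && (w \in H k)] &
    \sum_(k < n) s k * ((w \in H k)%:R * (X k w - p k)) = 0.
  by split; exists w; rewrite ?G0.
have termK w k : (w \in H k -> X k w = p k) -> s k * ((w \in H k)%:R * (X k w - p k)) = 0.
  by case: (w \in H k) => [/(_ isT) -> | _]; rewrite ?subrr ?mulr0 ?mul0r ?mulr0.
case: (boolP [exists k, P k && (s k != 0)]) => [/existsP[k /andP[Pk sk]] | /existsPn sP].
  exists u; first by apply/existsP; exists k; rewrite sk uH.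
  by apply: big1 => k' _; apply: termK; exact: uX.
have Pi : ~~ P i by move: (sP i); rewrite si andbT.
exists v; first by apply/existsP; exists i; rewrite si vH.
apply: big1 => k _; case: (boolP (P k)) => Pk; last by apply: termK; exact: vX.
by move: (sP k); rewrite Pk negbK => /eqP ->; rewrite mul0r.
Qed.

End Coherence.

Lemma ext_family_lift (Omega : finType) n (F : 'I_n -> cevent Omega) G j :
  ext_family F G (lift ord_max j) = F j.
Proof. by rewrite /ext_family liftK. Qed.

Lemma ext_family_max (Omega : finType) n (F : 'I_n -> cevent Omega) G :
  ext_family F G ord_max = G.
Proof. by rewrite /ext_family unlift_none. Qed.

Section Inclusion.
Variable Omega : finType.
Implicit Types a b c : cevent Omega.

Definition ce_verifiable c : bool := cond c :&: ev c != set0.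

Definition ce_sure c : bool := cond c \subset ev c.

(* Goodman--Nguyen inclusion: [a] is verified only if [b] is, and [b] is
   falsified only if [a] is. *)
Definition gn_incl a b : bool :=
  (cond a :&: ev a \subset cond b :&: ev b) && (cond b :\: ev b \subset cond a :\: ev a).

Lemma sure_or_incl_falsified a b :
  ce_sure b || gn_incl a b -> cond b :\: ev b \subset cond a :\: ev a.
Proof.
case/orP=> [/subsetP sure | /andP[_ //]].
by apply/subsetP => w; rewrite inE => /andP[/negP nB /sure].
Qed.

Lemma not_sure_or_incl a b : ~~ (ce_sure b || gn_incl a b) ->
  [\/ exists w, [&& w \in cond a, w \in ev a, w \in cond b & w \notin ev b],
      exists w1 w2, [&& w1 \in cond a, w1 \in ev a, w1 \notin cond b,
                        w2 \in cond b & w2 \notin ev b]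
    | exists w, [&& w \notin cond a, w \in cond b & w \notin ev b]].
Proof.
rewrite negb_or negb_and => /andP[/subsetPn[w2 w2K w2B] incl].
case/orP: incl => /subsetPn[w]; rewrite !inE.
- case/andP=> wH wA; case: (boolP (w \in cond b)) => wK.
    by rewrite /= => wB; apply: Or31; exists w; rewrite wH wA wK wB.
  by move=> _; apply: Or32; exists w, w2; rewrite wH wA wK w2K w2B.
- case/andP=> wB wK; case: (boolP (w \in cond a)) => wH.
    by rewrite andbT negbK => wA; apply: Or31; exists w; rewrite wH wA wK wB.
  by move=> _; apply: Or33; exists w; rewrite wH wK wB.
Qed.

End Inclusion.

Section Values.
Variables (R : realFieldType) (Omega : finType).
Implicit Types (a b : cevent Omega) (x y z : R) (w : Omega).

Lemma neg_valE a x w : neg_val a x w = 1 - ce_val a x w.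
Proof.
by rewrite /neg_val /ce_val; case: (w \in cond a); case: (w \in ev a); rewrite /= ?subrr ?subr0.
Qed.

Lemma ce_val_ge0 a x w : 0 <= x -> 0 <= ce_val a x w.
Proof. by rewrite /ce_val; case: (w \in cond a) => //; case: (w \in ev a). Qed.

Lemma conj_valE a b x y z w :
  cond b :\: ev b \subset cond a :\: ev a ->
  (w \in cond a -> w \in ev a -> w \notin cond b -> y = 1) ->
  conj_val a b x y z w = if w \in cond a :|: cond b then ce_val a x w else z.
Proof.
move=> /subsetP/(_ w); rewrite /conj_val /ce_val !inE.
by case: (w \in cond a); case: (w \in ev a); case: (w \in cond b); case: (w \in ev b);
  rewrite //=; by [move/(_ isT) | move=> _ /(_ isT isT isT)].
Qed.

End Values.

Section IteratedConditional.
Variables (R : realFieldType) (Omega : finType) (a b : cevent Omega) (x y z mu : R).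
Hypotheses (coh : iter_coherent b a x y z mu) (ab : ce_sure b || gn_incl a b).

Lemma iter_prev_ge0 : 0 <= x.
Proof.
have [[w _ le0] _] := coherent_prev_between (@Ordinal 4 0 isT) coh.
by move: le0; rewrite /iter_family_val /=; case: (w \in ev a) => /=; lra.
Qed.

Lemma iter_conj_valE w :
  conj_val a b x y z w = if w \in cond a :|: cond b then ce_val a x w else z.
Proof.
apply: conj_valE; first exact: sure_or_incl_falsified.
move=> wH wA wK; case/orP: ab => [/subsetP sure | /andP[/subsetP incl _]].
  have [[w1 w1K le1] [w2 w2K ge1]] := coherent_prev_between (@Ordinal 4 1 isT) coh.
  by move: le1 ge1; rewrite /iter_family_val /= (sure _ w1K) (sure _ w2K) /=; lra.
by have := incl w; rewrite !inE wH wA (negbTE wK) => /(_ isT).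
Qed.

(* Betting 1 on [a] and -1 on the conjunction yields the sure gain z - x. *)
Lemma iter_prev_conj : z = x.
Proof.
have N1 : (-1 : R) != 0 by rewrite oppr_eq0 oner_eq0.
have := coherent_two_bets (i := @Ordinal 4 0 isT) (j := @Ordinal 4 2 isT)
  coh isT (oner_neq0 R) N1.
rewrite /iter_family_val /iter_family_cond /=.
have GE w : (w \in cond a) || (w \in cond a :|: cond b) ->
    1 * ((w \in cond a)%:R * ((w \in ev a)%:R - x)) +
    -1 * ((w \in cond a :|: cond b)%:R * (conj_val a b x y z w - z)) = z - x.
  rewrite iter_conj_valE inE /ce_val.
  by case: (w \in cond a); case: (w \in cond b); case: (w \in ev a) => //= _; lra.
by case=> [[w /GE -> Gw] [w' /GE -> Gw']]; lra.
Qed.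

Lemma iter_valE w : iter_val b a x y z mu w = ce_val a x w + mu * (1 - ce_val a x w).
Proof.
rewrite /iter_val iter_conj_valE neg_valE iter_prev_conj; case: ifP => // /negbT.
by rewrite inE negb_or => /andP[/negbTE wH _]; rewrite /ce_val wH.
Qed.

(* On the support of the bet on the iterated conditional its gain is
   c (1 - mu) with c > 0. *)
Lemma iter_prev_eq1 : mu = 1.
Proof.
have [[w wS le] [w' w'S ge]] := coherent_prev_between (@Ordinal 4 3 isT) coh.
have pos v : v \in iter_family_cond b a x (@Ordinal 4 3 isT) -> 0 < ce_val a x v.
  by rewrite inE lt0r ce_val_ge0 ?iter_prev_ge0 ?andbT.
move: (pos _ wS) (pos _ w'S) le ge; rewrite /iter_family_val /= !iter_valE; nra.
Qed.

Lemma iter_val_eq1 w : iter_val b a x y z mu w = 1.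
Proof. by rewrite iter_valE iter_prev_eq1 mul1r addrC subrK. Qed.

End IteratedConditional.

Section Characterisation.
Variables (R : realFieldType) (Omega : finType) (a b : cevent Omega).
Hypothesis va : ce_verifiable a.

Lemma iter_eq1_of_sure_or_incl : ce_sure b || gn_incl a b -> iter_eq1 R b a.
Proof. by move=> ab x y z mu coh; apply: iter_val_eq1. Qed.

Local Ltac unfold_iter_family :=
  rewrite /iter_family_val /iter_family_cond /iter_val /conj_val /neg_val /ce_val /= ?inE.

Lemma not_iter_eq1 : ~~ (ce_sure b || gn_incl a b) -> ~ iter_eq1 R b a.
Proof.
move: va => /set0Pn[w0]; rewrite inE => /andP[w0H w0A] /not_sure_or_incl bad IE.
suff [u coh val0] : exists2 u, iter_coherent b a (1 : R) 0 0 0 &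
                              iter_val b a (1 : R) 0 0 0 u = 0.
  by move: (IE _ _ _ _ coh u); rewrite val0 => /eqP; rewrite eq_sym oner_eq0.
case: bad => [[w /and4P[wH wA wK /negbTE wB]] |
              [w1 [w2 /and5P[w1H w1A /negbTE w1K w2K /negbTE w2B]]] |
              [w /and3P[/negbTE wH wK /negbTE wB]]].
- exists w; last by unfold_iter_family; rewrite wH wA wK wB mul0r addr0.
  apply: (coherent_of_fair_points (P := predT) (u := w) (v := w)) => // -[[|[|[|[|//]]]] ?];
  by unfold_iter_family; rewrite ?wH ?wA ?wK ?wB => *; rewrite ?oner_neq0 ?mulr0 ?mul0r ?addr0.
- exists w1; last by unfold_iter_family; rewrite w1H w1A w1K mul0r addr0.
  apply: (coherent_of_fair_points (P := fun i => val i != 1%N) (u := w1) (v := w2))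
    => -[[|[|[|[|//]]]] ?];
  by unfold_iter_family; rewrite ?w1H ?w1A ?w1K ?w2K ?w2B => *;
     rewrite ?oner_neq0 ?mulr0 ?mul0r ?addr0.
- exists w; last by unfold_iter_family; rewrite wH wK wB mul0r addr0.
  apply: (coherent_of_fair_points (P := fun i => val i != 0%N) (u := w) (v := w0))
    => -[[|[|[|[|//]]]] ?];
  by unfold_iter_family; rewrite ?wH ?wK ?wB ?w0H ?w0A => *;
     rewrite ?oner_neq0 ?mulr0 ?mul0r ?addr0.
Qed.

Lemma iter_eq1_iff : iter_eq1 R b a <-> ce_sure b || gn_incl a b.
Proof.
split; last exact: iter_eq1_of_sure_or_incl.
by move=> h; apply: contraT => nab; case: (not_iter_eq1 nab h).
Qed.

Lemma p_entails_of_sure_or_incl :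
  ce_sure b || gn_incl a b -> p_entails R (fun _ : 'I_1 => a) b.
Proof.
move: va => /set0Pn[w0]; rewrite inE => /andP[w0H w0A] ab; split.
  by apply: (coherent_of_fair_points (P := predT) (u := w0) (v := w0)) => // i; rewrite w0A.
move=> p coh /(_ ord0) p1.
have [[w wK le] [w' w'K ge]] := coherent_prev_between ord_max coh.
move: wK w'K le ge; rewrite /= ext_family_max => wK w'K le ge.
have q_le1 : p ord_max <= 1 by move: ge; case: (w' \in ev b) => /=; lra.
apply/eqP; rewrite eq_le q_le1 /=.
case/orP: ab => [/subsetP sure | /andP[/subsetP AB /subsetP KB]].
  by move: le; rewrite (sure _ wK).
(* betting 1 on [b] and -1 on [a] gains at least 1 - P(b) on its support *)
have N1 : (-1 : R) != 0 by rewrite oppr_eq0 oner_eq0.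
have [[v vS Gv] _] := coherent_two_bets coh (neq_lift ord_max ord0) (oner_neq0 R) N1.
move: vS Gv; rewrite /= ext_family_lift ext_family_max p1.
have := AB v; have := KB v; rewrite !inE.
by case: (v \in cond a); case: (v \in ev a); case: (v \in cond b); case: (v \in ev b) => //=; lra.
Qed.

(* [p] assesses P(a) = 1 and P(b) = 0. *)
Lemma not_p_entails : ~~ (ce_sure b || gn_incl a b) -> ~ p_entails R (fun _ : 'I_1 => a) b.
Proof.
move: va => /set0Pn[w0]; rewrite inE => /andP[w0H w0A] /not_sure_or_incl bad [_ PE].
pose p (i : 'I_2) : R := (ord_max != i)%:R.
suff coh : ce_coherent (ext_family (fun _ => a) b) p.
  have p1 j : p (lift ord_max j) = 1 by rewrite /p neq_lift.
  by move: (PE p coh p1); rewrite /p eqxx => /eqP; rewrite eq_sym oner_eq0.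
case: bad => [[w /and4P[wH wA wK /negbTE wB]] |
              [w1 [w2 /and5P[w1H w1A /negbTE w1K w2K /negbTE w2B]]] |
              [w /and3P[/negbTE wH wK /negbTE wB]]].
- apply: (coherent_of_fair_points (P := predT) (u := w) (v := w)) => // i;
  case: (unliftP ord_max i) => [j -> | ->];
  by rewrite /p ?ext_family_lift ?ext_family_max ?neq_lift ?eqxx ?wA ?wB.
- apply: (coherent_of_fair_points (P := fun i => ord_max != i) (u := w1) (v := w2)) => i;
  case: (unliftP ord_max i) => [j -> | ->];
  by rewrite /p ?ext_family_lift ?ext_family_max ?neq_lift ?eqxx ?w1H ?w1A ?w1K ?w2K ?w2B.
- apply: (coherent_of_fair_points (P := fun i => ord_max == i) (u := w) (v := w0)) => i;
  case: (unliftP ord_max i) => [j -> | ->];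
  by rewrite /p ?ext_family_lift ?ext_family_max ?(negbTE (neq_lift _ _)) ?eqxx
             ?wH ?wK ?wB ?w0H ?w0A.
Qed.

Lemma p_entails_iff : p_entails R (fun _ : 'I_1 => a) b <-> ce_sure b || gn_incl a b.
Proof.
split; last exact: p_entails_of_sure_or_incl.
by move=> h; apply: contraT => nab; case: (not_p_entails nab h).
Qed.

End Characterisation.

Lemma p_consistent_quasi_conj (R : realFieldType) (Omega : finType) (c1 c2 : cevent Omega) :
  p_consistent R (fun i : 'I_2 => if val i == 0%N then c1 else c2) ->
  ce_verifiable (quasi_conj c1 c2).
Proof.
move=> pc; have [_ [w wS Gw]] :=
  coherent_two_bets (i := ord0) (j := ord_max) pc isT (oner_neq0 R) (oner_neq0 R).
apply/set0Pn; exists w; move: wS Gw; rewrite /= !inE.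
by case: (w \in cond c1); case: (w \in ev c1); case: (w \in cond c2); case: (w \in ev c2)
  => //=; lra.
Qed.

Theorem mainTheorem3 (R : realFieldType) (Omega : finType)
    (c1 c2 c3 : cevent Omega)
    (hH1 : cond c1 != set0) (hH2 : cond c2 != set0) (hH3 : cond c3 != set0)
    (hpc : p_consistent R (fun i : 'I_2 => if val i == 0%N then c1 else c2)) :
  p_entails R (fun _ : 'I_1 => quasi_conj c1 c2) c3 <->
  iter_eq1 R c3 (quasi_conj c1 c2).
Proof.
have vqc := p_consistent_quasi_conj hpc.
exact: iff_trans (p_entails_iff R c3 vqc) (iff_sym (iter_eq1_iff R c3 vqc)).
Qed.
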